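(* Let $r>5$ with $r\not\equiv 0\pmod 3$, and let $C_r$ be the directed cycle of length $r$. If some type-A prime divides $r$, then $\chi^*_o(C_r)\leq 4-\beta(r)$.
   Context: The directed cycle $C_r$ has vertices $u_i$, $i\in\mathbb{Z}/r\mathbb{Z}$, and arcs $u_iu_{i+1}$. For a set $S$ of $k$ colors, a $b$-fold oriented $k$-coloring of an oriented graph $G$ is a map $f$ from $V(G)$ to the $b$-element subsets of $S$ such that (i) $f(x)\cap f(y)=\emptyset$ for every arc $xy$, and (ii) for all arcs $xy, zw$, $f(x)\cap f(w)\neq\emptyset$ implies $f(y)\cap f(z)=\emptyset$. $\chi^b_o(G)$ is the minimum such $k$, and $\chi^*_o(G)=\lim_{b\to\infty}\chi^b_o(G)/b=\inf_{b\ge1}\chi^b_o(G)/b$. A prime $p>3$ is type-A if $p\equiv 3\pmod 4$. For $r>5$: $\beta(r)=0$ if $r$ has no type-A prime factor, and otherwise $\beta(r)=\frac{4}{p+1}$ where $p$ is the least type-A prime factor of $r$. *)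

From HB Require Import structures.
From mathcomp Require Import all_boot all_order all_algebra.
From mathcomp Require Import boolp classical_sets reals.
Set Implicit Arguments. Unset Strict Implicit. Unset Printing Implicit Defensive.
Import Order.TTheory GRing.Theory Num.Theory.

(* Directed cycle C_r: vertices u_i, i in Z/rZ (represented by 'I_r),
   arcs u_i u_{i+1}. *)
Definition cycle_arc (r : nat) : rel 'I_r := fun i j => j == ordS i.

Definition oriented_coloring (T : finType) (arc : rel T) (b k : nat)
    (f : T -> {set 'I_k}) : Prop :=
  [/\ (forall x, #|f x| = b),
      (forall x y, arc x y -> [disjoint f x & f y]) &
      (forall x y z w, arc x y -> arc z w ->
         ~~ [disjoint f x & f w] -> [disjoint f y & f z])].

Definition colorable (T : finType) (arc : rel T) (b k : nat) : Prop :=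
  exists f : T -> {set 'I_k}, @oriented_coloring T arc b k f.

(* chi^b_o(G): least k with a b-fold oriented k-coloring
   (defaults to 0 if none exists, which never happens for oriented graphs). *)
Definition chi_b (T : finType) (arc : rel T) (b : nat) : nat :=
  match pselect (exists k, `[< @colorable T arc b k >]) with
  | left h => ex_minn h
  | right _ => 0%N
  end.

Local Open Scope classical_set_scope.
Local Open Scope ring_scope.

Definition chi_star (R : realType) (T : finType) (arc : rel T) : R :=
  inf [set ((chi_b arc b)%:R / b%:R : R) | b in [set b : nat | (0 < b)%N]].

Definition typeA (p : nat) : bool := [&& prime p, (3 < p)%N & (p %% 4 == 3)%N].


Definition beta (R : realType) (r : nat) : R :=
  match pselect (exists p, typeA p && (p %| r)%N) with
  | left h => 4 / ((ex_minn h)%:R + 1)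
  | right _ => 0
  end.

From mathcomp Require Import all_boot all_order all_algebra.
From mathcomp Require Import boolp classical_sets reals.
From mathcomp Require Import zify ring lra.
Import Order.TTheory GRing.Theory Num.Theory.

(* Let p = 4m + 3 be a type-A prime dividing r and give u_x the m + 1
   consecutive residues mod p starting at x (m + 1).  Consecutive vertices get
   disjoint blocks, and a colour of u_x is followed by a colour of u_{x+1} at
   a forward distance in (0, 2m + 2).  A conflict between arcs xy and zw would
   close a walk of forward length in (0, 4m + 3) = (0, p) around Z/pZ, which is
   impossible.  Hence chi^{m+1}_o(C_r) <= p and
   chi^*_o(C_r) <= (4m + 3) / (m + 1) = 4 - 4 / (p + 1). *)

Section ArcBlocks.

Variables k b : nat.
Local Notation p := k.+1.

Definition arc_block (n : nat) : {set 'I_p} := [set inZp (n + j) | j : 'I_b].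

Lemma mem_arc_block n c :
  c \in arc_block n -> exists2 j, (j < b)%N & val c = (n + j) %% p.
Proof. by case/imsetP=> j _ ->; exists j. Qed.

Lemma card_arc_block n : (b <= p)%N -> #|arc_block n| = b.
Proof.
move=> le_bp; rewrite card_imset ?card_ord // => j1 j2 /(congr1 val) /eqP /=.
by rewrite eqn_modDl !modn_small ?(leq_trans _ le_bp) // => /eqP/val_inj.
Qed.

Lemma arc_block_next n n' a c : n' = n + b %[mod p] ->
  a \in arc_block n -> c \in arc_block n' ->
  exists2 e, (0 < e < b.*2)%N & a + e = c %[mod p].
Proof.
move=> def_n' /mem_arc_block[j lt_jb ->] /mem_arc_block[j' lt_j'b ->].
exists (b + j' - j); first by lia.
rewrite modnDml modn_mod -[in RHS]modnDml def_n' modnDml.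
by congr (_ %% _); lia.
Qed.

Lemma addn_neq_mod a e : (0 < e < p)%N -> a + e != a %[mod p].
Proof.
by move=> e_bounds; rewrite -{2}[a]addn0 eqn_modDl mod0n modn_small; lia.
Qed.

Lemma ordS_mul_mod r (x : 'I_r) :
  (p %| r)%N -> ordS x * b = x * b + b %[mod p].
Proof. by move=> p_r; rewrite /= -modnMml (modn_dvdm _ p_r) modnMml mulSnr. Qed.

Definition block_coloring {r} (x : 'I_r) : {set 'I_p} := arc_block (x * b).

Lemma block_coloring_oriented r : (p %| r)%N -> (4 * b <= p.+1)%N ->
  oriented_coloring (@cycle_arc r) b (@block_coloring r).
Proof.
move=> p_r le_4b_p1.
have next (x : 'I_r) a c :
    a \in block_coloring x -> c \in block_coloring (ordS x) ->
    exists2 e, (0 < e < b.*2)%N & a + e = c %[mod p].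
  exact/arc_block_next/ordS_mul_mod.
split.
- by move=> x; rewrite card_arc_block //; lia.
- move=> x y /eqP ->; rewrite -setI_eq0; apply/eqP/setP => a.
  rewrite !inE; apply/negP => /andP[ax ay].
  have [e e_bounds ae_a] := next x a a ax ay.
  by move/eqP: ae_a; apply/negP/addn_neq_mod; lia.
- move=> x y z w /eqP -> /eqP ->; rewrite -!setI_eq0 => /set0Pn[a /setIP[ax aw]].
  apply/eqP/setP => c; rewrite !inE; apply/negP => /andP[cy cz].
  have [e1 e1_bounds ae1_c] := next x a c ax cy.
  have [e2 e2_bounds ce2_a] := next z c a cz aw.
  have : a + (e1 + e2) = a %[mod p] by rewrite addnA -modnDml ae1_c modnDml.
  by move/eqP; apply/negP/addn_neq_mod; lia.
Qed.

End ArcBlocks.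

Lemma cycle_arc_colorable r b k : (k.+1 %| r)%N -> (4 * b <= k.+2)%N ->
  colorable (@cycle_arc r) b k.+1.
Proof.
by move=> p_r le_4b; exists (block_coloring k b); apply: block_coloring_oriented.
Qed.

Lemma chi_b_le {T : finType} (arc : rel T) b k :
  colorable arc b k -> (chi_b arc b <= k)%N.
Proof.
rewrite /chi_b => col; case: pselect => [ex_col | no_col].
  by case: ex_minnP => k0 _; apply; apply/asboolP.
by case: no_col; exists k; apply/asboolP.
Qed.

Local Open Scope ring_scope.

Lemma chi_star_le (R : realType) {T : finType} {arc : rel T} {b k : nat} :
  (0 < b)%N -> colorable arc b k -> chi_star R arc <= k%:R / b%:R.
Proof.
move=> b_gt0 col; apply: (@le_trans _ _ ((chi_b arc b)%:R / b%:R)).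
  apply: ge_inf; last by exists b.
  by exists 0 => _ [b' _ <-]; rewrite divr_ge0.
by rewrite ler_pM2r ?invr_gt0 ?ltr0n // ler_nat chi_b_le.
Qed.

Lemma beta_typeA_witness (R : realType) r : (exists p, typeA p && (p %| r)%N) ->
  exists2 p, typeA p && (p %| r)%N & beta R r = 4 / (p%:R + 1).
Proof.
rewrite /beta => ex_p; case: pselect => // ex_p'.
by case: ex_minnP => p p_ok _; exists p.
Qed.

Lemma typeA_mod4 p : typeA p -> exists m, p = (4 * m).+3%N.
Proof.
case/and3P => _ _ /eqP p_mod4; exists (p %/ 4)%N.
by rewrite {1}(divn_eq p 4) p_mod4; lia.
Qed.

Theorem lemma9 (R : realType) (r : nat) :
  (5 < r)%N -> ~~ (3 %| r)%N ->
  (exists p, typeA p && (p %| r)%N) ->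
  chi_star R (@cycle_arc r) <= 4 - beta R r.
Proof.
move=> _ _ /(beta_typeA_witness R) [p /andP[typeA_p p_r] ->].
have [m def_p] := typeA_mod4 p typeA_p.
have col : colorable (@cycle_arc r) m.+1 (4 * m).+3.
  by apply: cycle_arc_colorable; rewrite -?def_p //; lia.
apply: le_trans (chi_star_le R (ltn0Sn m) col) _; rewrite def_p.
suff -> : 4 - 4 / ((4 * m).+3%:R + 1) = (4 * m).+3%:R / m.+1%:R :> R by [].
have m_ge0 : 0 <= m%:R :> R by [].
by field; apply/andP; split; apply: lt0r_neq0; lra.
Qed.
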